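(* For every $\kappa>0$ there exists a constant $C_\kappa$ such that for all $r>0$ and all $\lambda\ge1$, $$\xi_\lambda(\kappa r)\le C_\kappa\,\xi_\lambda(r),\qquad \vartheta_\lambda(\kappa r)\le C_\kappa\,\vartheta_\lambda(r).$$
   Context: For $\lambda\ge1$ define $m_\lambda(t)=\lambda t^{-5/2}$ for $0<t\le1/2$, $m_\lambda(t)=\lambda\chi(t)$ for $1/2<t\le1$, $m_\lambda(t)=\lambda t^{-3/2}$ for $t>1$, where $\chi$ is a $C^1$ decreasing convex function on $[1/2,1]$ chosen so that $m_\lambda$ is a $C^1$ decreasing bijection of $(0,\infty)$ onto itself; and $\mu_\lambda(t)=\lambda t^{-5/2}$ for $0<t\le1/2$, $\mu_\lambda(t)=\lambda\tilde\chi(t)$ for $1/2<t\le1$, $\mu_\lambda(t)=\lambda t^{-1/2}$ for $t>1$, with $\tilde\chi$ a $C^1$ decreasing convex function chosen so that $\mu_\lambda$ is $C^1$ on $(0,\infty)$. Set $\xi_\lambda(r)=-m_\lambda'(m_\lambda^{-1}(r))$ and $\vartheta_\lambda(r)=-\mu_\lambda'(\mu_\lambda^{-1}(r))$ for $r>0$. *)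

From Stdlib Require Import Reals Lra ClassicalEpsilon.
From Coquelicot Require Import Coquelicot.
Open Scope R_scope.

Definition m_fun (chi : R -> R) (lam t : R) : R :=
  if Rle_dec t (1/2) then lam * Rpower t (-5/2)
  else if Rle_dec t 1 then lam * chi t
  else lam * Rpower t (-3/2).

Definition mu_fun (chit : R -> R) (lam t : R) : R :=
  if Rle_dec t (1/2) then lam * Rpower t (-5/2)
  else if Rle_dec t 1 then lam * chit t
  else lam * Rpower t (-1/2).

Definition convex_on_half_one (f : R -> R) : Prop :=
  forall x y a, 1/2 <= x <= 1 -> 1/2 <= y <= 1 -> 0 <= a <= 1 ->
    f (a * x + (1 - a) * y) <= a * f x + (1 - a) * f y.

Definition decreasing_on_half_one (f : R -> R) : Prop :=
  forall x y, 1/2 <= x -> x <= y -> y <= 1 -> f y <= f x.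

Definition C1_pos (f : R -> R) : Prop :=
  forall t, 0 < t -> ex_derive f t /\ continuous (Derive f) t.

Definition admissible_m (chi : R -> R) : Prop :=
  convex_on_half_one chi /\ decreasing_on_half_one chi /\
  forall lam, 1 <= lam ->
    C1_pos (m_fun chi lam) /\
    (forall t s, 0 < t -> t < s -> m_fun chi lam s < m_fun chi lam t) /\
    (forall t, 0 < t -> 0 < m_fun chi lam t) /\
    (forall r, 0 < r -> exists t, 0 < t /\ m_fun chi lam t = r).

Definition admissible_mu (chit : R -> R) : Prop :=
  convex_on_half_one chit /\ decreasing_on_half_one chit /\
  forall lam, 1 <= lam -> C1_pos (mu_fun chit lam).

(* inverse on (0,oo): some t > 0 with f t = r (unique when f is a bijection
   of (0,oo) onto itself). *)
Definition pos_inv (f : R -> R) (r : R) : R :=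
  epsilon (inhabits 0) (fun t => 0 < t /\ f t = r).

Definition xi (chi : R -> R) (lam r : R) : R :=
  - Derive (m_fun chi lam) (pos_inv (m_fun chi lam) r).

Definition vartheta (chit : R -> R) (lam r : R) : R :=
  - Derive (mu_fun chit lam) (pos_inv (mu_fun chit lam) r).

From Stdlib Require Import Reals Lra ClassicalEpsilon.
From Coquelicot Require Import Coquelicot.
Open Scope R_scope.

(* Since m_lambda = lambda m_1, one has xi_lambda(r) = - lambda m_1'(t) where m_1(t) = r / lambda,
   so it suffices to bound - m_1'(t') by - m_1'(t) whenever m_1(t') = kappa m_1(t); the same holds
   for mu.  Both are of the form f = glue e chi (e = -3/2 resp. -1/2).  For t <= 1/2 one has
   - f' = 5/2 f^(7/5) with f >= 1, for t >= 1 one has - f' = - e f^p with f <= 1 and p = (e-1)/e,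
   and on [1/2, 1] both - f' and f lie between positive constants (convexity of chi gives
   f' <= f'(1) = e there).  Hence - f' is comparable to phi(f), phi(y) = min(y^(7/5), y^p), and
   phi(kappa y) <= max(kappa^(7/5), kappa^p) phi(y). *)

Lemma Rpower_gt_0 x c : 0 < Rpower x c.
Proof. apply exp_pos. Qed.

Lemma Rpower_1_l c : Rpower 1 c = 1.
Proof. unfold Rpower; rewrite ln_1, Rmult_0_r; apply exp_0. Qed.

Lemma Rle_Rpower_l_nonpos a b c : c <= 0 -> 0 < a <= b -> Rpower b c <= Rpower a c.
Proof.
  intros Hc Hab.
  rewrite <- (Ropp_involutive c), !(Rpower_Ropp _ (- c)).
  apply Rinv_le_contravar; [apply Rpower_gt_0|].
  apply Rle_Rpower_l; lra.
Qed.

Lemma Rle_Rpower_base_le_1 y a b : 0 < y <= 1 -> a <= b -> Rpower y b <= Rpower y a.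
Proof.
  intros Hy Hab; unfold Rpower.
  assert (ln y <= 0) by (rewrite <- ln_1; apply ln_le; lra).
  destruct (Rle_lt_or_eq_dec (b * ln y) (a * ln y)) as [Hlt|Heq]; [nra| |].
  - left; apply exp_increasing, Hlt.
  - rewrite Heq; lra.
Qed.

Lemma continuous_le_at_right (h1 h2 : R -> R) a b : a < b ->
  continuous h1 a -> continuous h2 a ->
  (forall x, a < x < b -> h1 x <= h2 x) -> h1 a <= h2 a.
Proof.
  intros Hab C1 C2 Hle.
  assert (Hright : forall h : R -> R, continuous h a -> filterlim h (at_right a) (locally (h a))).
  { intros h Ch. eapply filterlim_filter_le_1; [|exact Ch].
    intros P [d Hd]. exists d. intros y Hy _. exact (Hd y Hy). }
  assert (Hba : 0 < b - a) by lra.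
  apply (@filterlim_le _ _ (Proper_StrongProper _ (at_right_proper_filter a))
    h1 h2 (h1 a) (h2 a)); [|auto|auto].
  exists (mkposreal _ Hba). intros y Hy Hay. apply Hle.
  apply Rabs_def2 in Hy. simpl in Hy. unfold minus, plus, opp in Hy; simpl in Hy. lra.
Qed.

Lemma Derive_le_of_slopes f x y d : 0 < d -> ex_derive f x -> ex_derive f y ->
  (forall h, 0 < h < d -> (f (x + h) - f x) / h <= (f y - f (y - h)) / h) ->
  Derive f x <= Derive f y.
Proof.
  intros Hd Dx Dy Hslope.
  apply Derive_correct, is_derive_Reals in Dx, Dy.
  apply Rnot_lt_le; intros Hlt.
  assert (Heps : 0 < (Derive f x - Derive f y) / 2) by lra.
  destruct (Dx _ Heps) as [dx Hdx]; destruct (Dy _ Heps) as [dy Hdy].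
  set (h := Rmin d (Rmin dx dy) / 2).
  assert (Hmin : 0 < Rmin d (Rmin dx dy)).
  { apply Rmin_glb_lt; [|apply Rmin_glb_lt]; [lra | apply cond_pos | apply cond_pos]. }
  assert (Hh : 0 < h < d /\ h < dx /\ h < dy).
  { assert (Rmin d (Rmin dx dy) <= d) by apply Rmin_l.
    assert (Rmin d (Rmin dx dy) <= Rmin dx dy) by apply Rmin_r.
    assert (Rmin dx dy <= dx) by apply Rmin_l.
    assert (Rmin dx dy <= dy) by apply Rmin_r.
    unfold h; lra. }
  assert (Qx := Hdx h ltac:(lra) ltac:(rewrite Rabs_right; lra)).
  assert (Qy := Hdy (- h) ltac:(lra) ltac:(rewrite Rabs_left; lra)).
  apply Rabs_def2 in Qx, Qy.
  replace ((f (y + - h) - f y) / - h) with ((f y - f (y - h)) / h) in Qy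
    by (unfold Rminus; field; lra).
  assert (Hs := Hslope h ltac:(lra)).
  lra.
Qed.

Lemma convex_increment_le chi x h : convex_on_half_one chi ->
  1/2 <= x -> 0 < h -> x + h <= 1 - h ->
  chi (x + h) - chi x <= chi 1 - chi (1 - h).
Proof.
  intros Hc Hx Hh Hxh.
  set (a := (1 - x - h) / (1 - x)).
  assert (Ha : 0 <= a <= 1).
  { unfold a; split.
    - apply Rdiv_le_0_compat; lra.
    - apply Rmult_le_reg_r with (1 - x); [lra|]. field_simplify; lra. }
  (* x + h and 1 - h are the convex combinations of x and 1 with swapped weights. *)
  assert (H1 := Hc x 1 a ltac:(lra) ltac:(lra) Ha).
  assert (H2 := Hc x 1 (1 - a) ltac:(lra) ltac:(lra) ltac:(lra)).
  replace (a * x + (1 - a) * 1) with (x + h) in H1 by (unfold a; field; lra).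
  replace ((1 - a) * x + (1 - (1 - a)) * 1) with (1 - h) in H2 by (unfold a; field; lra).
  lra.
Qed.

Definition glue (e : R) (chi : R -> R) (t : R) : R :=
  if Rle_dec t (1/2) then Rpower t (-5/2)
  else if Rle_dec t 1 then chi t else Rpower t e.

Lemma glue_left e chi t : t <= 1/2 -> glue e chi t = Rpower t (-5/2).
Proof. intros; unfold glue; destruct Rle_dec; lra. Qed.

Lemma glue_mid e chi t : 1/2 < t <= 1 -> glue e chi t = chi t.
Proof. intros; unfold glue; destruct Rle_dec; [lra|]; destruct Rle_dec; lra. Qed.

Lemma glue_right e chi t : 1 < t -> glue e chi t = Rpower t e.
Proof. intros; unfold glue; destruct Rle_dec; [lra|]; destruct Rle_dec; lra. Qed.

Lemma m_fun_glue chi lam t : m_fun chi lam t = lam * glue (-3/2) chi t.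
Proof. unfold m_fun, glue; destruct Rle_dec; [|destruct Rle_dec]; reflexivity. Qed.

Lemma mu_fun_glue chit lam t : mu_fun chit lam t = lam * glue (-1/2) chit t.
Proof. unfold mu_fun, glue; destruct Rle_dec; [|destruct Rle_dec]; reflexivity. Qed.

Definition phi (p y : R) : R := Rmin (Rpower y (7/5)) (Rpower y p).

Lemma phi_gt_0 p y : 0 < phi p y.
Proof. apply Rmin_glb_lt; apply Rpower_gt_0. Qed.

Lemma phi_ge_1 p y : 7/5 <= p -> 1 <= y -> phi p y = Rpower y (7/5).
Proof. intros Hp Hy; apply Rmin_left, Rle_Rpower; lra. Qed.

Lemma phi_le_1 p y : 7/5 <= p -> 0 < y <= 1 -> phi p y = Rpower y p.
Proof. intros Hp Hy; apply Rmin_right, Rle_Rpower_base_le_1; lra. Qed.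

Lemma phi_le_compat p y z : 0 <= p -> 0 < y <= z -> phi p y <= phi p z.
Proof.
  intros Hp Hyz; unfold phi.
  apply Rle_trans with (Rmin (Rpower z (7/5)) (Rpower y p)).
  - apply Rle_min_compat_r, Rle_Rpower_l; lra.
  - apply Rle_min_compat_l, Rle_Rpower_l; lra.
Qed.

Lemma phi_dilation p k y : 0 < k -> 0 < y ->
  phi p (k * y) <= Rmax (Rpower k (7/5)) (Rpower k p) * phi p y.
Proof.
  intros Hk Hy; unfold phi.
  rewrite <- !Rpower_mult_distr by lra.
  assert (A1 := Rpower_gt_0 k (7/5)); assert (A2 := Rpower_gt_0 k p).
  assert (A3 := Rpower_gt_0 y (7/5)); assert (A4 := Rpower_gt_0 y p).
  assert (M1 := Rmax_l (Rpower k (7/5)) (Rpower k p)).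
  assert (M2 := Rmax_r (Rpower k (7/5)) (Rpower k p)).
  unfold Rmin at 2; destruct Rle_dec.
  - eapply Rle_trans; [apply Rmin_l|]; nra.
  - eapply Rle_trans; [apply Rmin_r|]; nra.
Qed.

Definition comparable_on (P : R -> Prop) (g h : R -> R) : Prop :=
  exists c1 c2, 0 < c1 /\ 0 < c2 /\ forall t, P t -> c1 * h t <= g t <= c2 * h t.

Lemma comparable_on_eq P g h c : 0 < c -> (forall t, P t -> g t = c * h t) ->
  comparable_on P g h.
Proof. intros Hc Heq; exists c, c; split; [|split]; [lra|lra|]; intros t Pt; rewrite Heq; auto; lra. Qed.

Lemma comparable_on_bounded P g h a b c d : 0 < a -> 0 < c -> 0 < d ->
  (forall t, P t -> a <= g t <= b /\ c <= h t <= d) -> comparable_on P g h.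
Proof.
  intros Ha Hc Hd Hb.
  assert (Hb1 := Rmax_l 1 b); assert (Hbb := Rmax_r 1 b).
  exists (a / d), (Rmax 1 b / c).
  split; [apply Rdiv_lt_0_compat; lra|].
  split; [apply Rdiv_lt_0_compat; lra|].
  intros t Pt; destruct (Hb t Pt) as [[Hga Hgb] [Hhc Hhd]]; split.
  - apply Rle_trans with (a / d * d).
    + apply Rmult_le_compat_l; [apply Rdiv_le_0_compat|]; lra.
    + replace (a / d * d) with a by (field; lra); lra.
  - apply Rle_trans with (Rmax 1 b / c * c).
    + replace (Rmax 1 b / c * c) with (Rmax 1 b) by (field; lra); lra.
    + apply Rmult_le_compat_l; [apply Rdiv_le_0_compat|]; lra.
Qed.

Lemma comparable_on_or P Q g h : (forall t, 0 <= h t) ->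
  comparable_on P g h -> comparable_on Q g h ->
  comparable_on (fun t => P t \/ Q t) g h.
Proof.
  intros Hh [c1 [c2 [H1 [H2 HP]]]] [d1 [d2 [K1 [K2 HQ]]]].
  assert (Hm := Rmin_l c1 d1); assert (Hm' := Rmin_r c1 d1).
  assert (HM := Rmax_l c2 d2); assert (HM' := Rmax_r c2 d2).
  exists (Rmin c1 d1), (Rmax c2 d2).
  split; [apply Rmin_glb_lt; lra|].
  split; [lra|].
  intros t [Pt|Qt]; [destruct (HP t Pt) | destruct (HQ t Qt)];
    assert (Ht := Hh t); split; nra.
Qed.

Lemma comparable_on_sub P Q g h : (forall t, Q t -> P t) ->
  comparable_on P g h -> comparable_on Q g h.
Proof. intros HQP [c1 [c2 [H1 [H2 HP]]]]; exists c1, c2; auto. Qed.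

Lemma comparable_on_gt_0 P g h : comparable_on P g h ->
  (forall t, P t -> 0 < h t) -> forall t, P t -> 0 < g t.
Proof.
  intros [c1 [c2 [H1 [H2 HP]]]] Hh t Pt.
  destruct (HP t Pt); assert (Ht := Hh t Pt); nra.
Qed.

Lemma comparable_phi_dilation (g w : R -> R) p :
  comparable_on (fun t => 0 < t) g (fun t => phi p (w t)) ->
  (forall t, 0 < t -> 0 < w t) ->
  forall k, 0 < k -> exists C, forall t t', 0 < t -> 0 < t' ->
    w t' = k * w t -> g t' <= C * g t.
Proof.
  intros [c1 [c2 [Hc1 [Hc2 Hcmp]]]] Hw k Hk.
  set (K := Rmax (Rpower k (7/5)) (Rpower k p)).
  assert (HK : 0 < K) by (eapply Rlt_le_trans; [apply Rpower_gt_0 | apply Rmax_l]).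
  exists (c2 * K / c1); intros t t' Ht Ht' Hwt.
  destruct (Hcmp t Ht) as [Lt _]; destruct (Hcmp t' Ht') as [_ Ut'].
  assert (Hd := phi_dilation p k (w t) Hk (Hw t Ht)); fold K in Hd.
  rewrite Hwt in Ut'.
  apply Rle_trans with (c2 * K * phi p (w t)); [nra|].
  replace (c2 * K * phi p (w t)) with (c2 * K / c1 * (c1 * phi p (w t))) by (field; lra).
  apply Rmult_le_compat_l; [apply Rdiv_le_0_compat; nra | exact Lt].
Qed.

Lemma pos_inv_spec f r : (exists t, 0 < t /\ f t = r) ->
  0 < pos_inv f r /\ f (pos_inv f r) = r.
Proof. apply (epsilon_spec (inhabits 0)). Qed.

Section Glued.

Variables (e : R) (chi f : R -> R).
Hypothesis e_neg : e < 0.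
Hypothesis chi_convex : convex_on_half_one chi.
Hypothesis chi_decr : decreasing_on_half_one chi.
Hypothesis f_glue : forall t, f t = glue e chi t.
Hypothesis f_C1 : C1_pos f.

Lemma Derive_glue_left t : 0 < t < 1/2 -> Derive f t = -5/2 * Rpower t (-7/2).
Proof.
  intros Ht.
  rewrite (Derive_ext_loc f (fun u => Rpower u (-5/2))).
  - apply is_derive_unique, is_derive_Reals.
    replace (-7/2) with (-5/2 - 1) by field.
    apply derivable_pt_lim_power; lra.
  - apply (filter_imp (fun u => 0 < u < 1/2)).
    + intros u Hu; rewrite f_glue, glue_left; lra.
    + apply filter_and; [apply open_gt | apply open_lt]; lra.
Qed.

Lemma Derive_glue_right t : 1 < t -> Derive f t = e * Rpower t (e - 1).
Proof.
  intros Ht.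
  rewrite (Derive_ext_loc f (fun u => Rpower u e)).
  - apply is_derive_unique, is_derive_Reals, derivable_pt_lim_power; lra.
  - apply (filter_imp (fun u => 1 < u)); [|apply open_gt; lra].
    intros u Hu; rewrite f_glue, glue_right; lra.
Qed.

Let f_ex_derive t : 0 < t -> ex_derive f t.
Proof. apply f_C1. Qed.

Let Derive_f_continuous t : 0 < t -> continuous (Derive f) t.
Proof. apply f_C1. Qed.

Lemma glue_at_1_ge : Rpower 2 e <= f 1.
Proof.
  apply (continuous_le_at_right (fun _ => Rpower 2 e) f 1 2);
    [lra | apply continuous_const | exact (ex_derive_continuous f 1 (f_ex_derive 1 ltac:(lra))) |].
  intros x Hx; rewrite f_glue, glue_right by lra.
  apply Rle_Rpower_l_nonpos; lra.
Qed.

Lemma Derive_glue_at_1_le : Derive f 1 <= e * Rpower 2 (e - 1).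
Proof.
  apply (continuous_le_at_right (Derive f) (fun _ => e * Rpower 2 (e - 1)) 1 2);
    [lra | apply Derive_f_continuous; lra | apply continuous_const |].
  intros x Hx; rewrite Derive_glue_right by lra.
  assert (Rpower 2 (e - 1) <= Rpower x (e - 1)) by (apply Rle_Rpower_l_nonpos; lra).
  nra.
Qed.

Lemma Derive_glue_mid_le t : 1/2 <= t <= 1 -> Derive f t <= e * Rpower 2 (e - 1).
Proof.
  assert (Hint : forall x, 1/2 < x < 1 -> Derive f x <= Derive f 1).
  { intros x Hx.
    apply (Derive_le_of_slopes f x 1 ((1 - x) / 2)); [lra | apply f_ex_derive; lra
      | apply f_ex_derive; lra |].
    intros h Hh.
    rewrite !f_glue, !glue_mid by lra.
    unfold Rdiv; apply Rmult_le_compat_r; [left; apply Rinv_0_lt_compat; lra|].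
    apply convex_increment_le; auto; lra. }
  assert (Hopen : forall x, 1/2 < x <= 1 -> Derive f x <= e * Rpower 2 (e - 1)).
  { intros x Hx; apply Rle_trans with (Derive f 1); [|exact Derive_glue_at_1_le].
    destruct (Req_dec x 1) as [->|]; [lra | apply Hint; lra]. }
  intros Ht; destruct (Req_dec t (1/2)) as [->|]; [|apply Hopen; lra].
  apply (continuous_le_at_right (Derive f) (fun _ => e * Rpower 2 (e - 1)) (1/2) 1);
    [lra | apply Derive_f_continuous; lra | apply continuous_const |].
  intros x Hx; apply Hopen; lra.
Qed.

Lemma glue_mid_bounds t : 1/2 <= t <= 1 ->
  Rpower 2 e <= f t <= Rmax (chi (1/2)) (Rpower (1/2) (-5/2)).
Proof.
  intros Ht; assert (Hlo := glue_at_1_ge).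
  rewrite f_glue, glue_mid in Hlo by lra.
  assert (Rpower 2 e <= 1).
  { rewrite <- (Rpower_1_l e); apply Rle_Rpower_l_nonpos; lra. }
  assert (1 <= Rpower (1/2) (-5/2)).
  { apply Rle_trans with (Rpower 1 (-5/2)); [rewrite Rpower_1_l; lra|].
    apply Rle_Rpower_l_nonpos; lra. }
  assert (Hm1 := Rmax_l (chi (1/2)) (Rpower (1/2) (-5/2))).
  assert (Hm2 := Rmax_r (chi (1/2)) (Rpower (1/2) (-5/2))).
  destruct (Req_dec t (1/2)) as [->|]; [rewrite f_glue, glue_left; lra|].
  rewrite f_glue, glue_mid by lra.
  assert (chi 1 <= chi t) by (apply chi_decr; lra).
  assert (chi t <= chi (1/2)) by (apply chi_decr; lra).
  lra.
Qed.

Lemma glue_gt_0 t : 0 < t -> 0 < f t.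
Proof.
  intros Ht; destruct (Rle_dec t (1/2)) as [H1|H1].
  - rewrite f_glue, glue_left by lra; apply Rpower_gt_0.
  - destruct (Rle_dec t 1) as [H2|H2].
    + assert (Hb := glue_mid_bounds t ltac:(lra)); assert (Hp := Rpower_gt_0 2 e); lra.
    + rewrite f_glue, glue_right by lra; apply Rpower_gt_0.
Qed.

Lemma Derive_glue_mid_bounded : exists B, forall t, 1/2 <= t <= 1 -> - Derive f t <= B.
Proof.
  destruct (bounded_continuity (Derive f) (1/2) 1) as [B HB].
  { intros x Hx; apply Derive_f_continuous; lra. }
  exists B; intros t Ht; specialize (HB t Ht).
  assert (- Derive f t <= Rabs (Derive f t)) by (rewrite <- Rabs_Ropp; apply RRle_abs).
  unfold norm in HB; simpl in HB; unfold abs in HB; simpl in HB; lra.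
Qed.

Lemma Derive_glue_comparable p : p * e = e - 1 -> 7/5 <= p ->
  comparable_on (fun t => 0 < t) (fun t => - Derive f t) (fun t => phi p (f t)).
Proof.
  intros Hpe Hp.
  apply (comparable_on_sub
    (fun t => 0 < t < 1/2 \/ (1/2 <= t <= 1 \/ 1 < t))); [intros t Ht; lra|].
  apply comparable_on_or; [intros; left; apply phi_gt_0 | |
    apply comparable_on_or; [intros; left; apply phi_gt_0 | |]].
  - apply (comparable_on_eq _ _ _ (5/2)); [lra|]; intros t Ht.
    assert (Hft : f t = Rpower t (-5/2)) by (rewrite f_glue, glue_left; lra).
    assert (1 <= f t).
    { rewrite Hft; apply Rle_trans with (Rpower 1 (-5/2)); [rewrite Rpower_1_l; lra|].
      apply Rle_Rpower_l_nonpos; lra. }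
    rewrite Derive_glue_left, phi_ge_1, Hft, Rpower_mult by lra.
    replace (-5/2 * (7/5)) with (-7/2) by field; lra.
  - destruct Derive_glue_mid_bounded as [B HB].
    set (ymax := Rmax (chi (1/2)) (Rpower (1/2) (-5/2))).
    assert (H2e := Rpower_gt_0 2 e); assert (H2e1 := Rpower_gt_0 2 (e - 1)).
    apply (comparable_on_bounded _ _ _ (- e * Rpower 2 (e - 1)) B (phi p (Rpower 2 e))
      (phi p ymax)); [nra | apply phi_gt_0 | apply phi_gt_0 |].
    intros t Ht; destruct (glue_mid_bounds t Ht) as [Hlo Hhi]; fold ymax in Hhi.
    assert (Hd := Derive_glue_mid_le t Ht).
    split; [split; [lra | apply HB, Ht]|].
    split; apply phi_le_compat; lra.
  - apply (comparable_on_eq _ _ _ (- e)); [lra|]; intros t Ht.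
    assert (Hft : f t = Rpower t e) by (rewrite f_glue, glue_right; lra).
    assert (0 < f t <= 1).
    { rewrite Hft; split; [apply Rpower_gt_0|].
      apply Rle_trans with (Rpower 1 e); [apply Rle_Rpower_l_nonpos; lra|].
      rewrite Rpower_1_l; lra. }
    rewrite Derive_glue_right, phi_le_1, Hft, Rpower_mult, (Rmult_comm e p), Hpe by lra; ring.
Qed.

Lemma glue_onto r : 0 < r -> exists t, 0 < t /\ f t = r.
Proof.
  intros Hr.
  set (t1 := Rmin (1/4) (Rpower (r + 1) (-2/5))).
  set (t2 := Rmax 2 (Rpower (r / 2) (/ e))).
  assert (T1 : 0 < t1) by (apply Rmin_glb_lt; [lra | apply Rpower_gt_0]).
  assert (T1a : t1 <= 1/4) by apply Rmin_l.
  assert (T1b : t1 <= Rpower (r + 1) (-2/5)) by apply Rmin_r.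
  assert (T2a : 2 <= t2) by apply Rmax_l.
  assert (T2b : Rpower (r / 2) (/ e) <= t2) by apply Rmax_r.
  assert (V1 : r + 1 <= f t1).
  { rewrite f_glue, glue_left by lra.
    apply Rle_trans with (Rpower (Rpower (r + 1) (-2/5)) (-5/2));
      [|apply Rle_Rpower_l_nonpos; lra].
    rewrite Rpower_mult; replace (-2/5 * (-5/2)) with 1 by field.
    rewrite Rpower_1; lra. }
  assert (V2 : f t2 <= r / 2).
  { rewrite f_glue, glue_right by lra.
    apply Rle_trans with (Rpower (Rpower (r / 2) (/ e)) e);
      [apply Rle_Rpower_l_nonpos; [lra | split; [apply Rpower_gt_0 | exact T2b]]|].
    rewrite Rpower_mult; replace (/ e * e) with 1 by (field; lra).
    rewrite Rpower_1; lra. }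
  destruct (Ranalysis5.IVT_interv (fun u => r - f u) t1 t2) as [z [Hz Hfz]];
    [| lra | lra | lra | exists z; split; lra].
  intros a Ha; apply continuity_pt_filterlim.
  apply (continuous_minus (fun _ => r) f); [apply continuous_const|].
  apply ex_derive_continuous, f_ex_derive; lra.
Qed.

End Glued.

Section Scaled.

Variables (f : R -> R) (g : R -> R -> R).
Hypothesis g_scaled : forall lam t, g lam t = lam * f t.
Hypothesis f_onto : forall r, 0 < r -> exists t, 0 < t /\ f t = r.

Lemma Derive_scaled lam t : Derive (g lam) t = lam * Derive f t.
Proof. rewrite (Derive_ext (g lam) (fun u => lam * f u)) by apply g_scaled; apply Derive_scal. Qed.

Lemma pos_inv_scaled lam r : 0 < lam -> 0 < r ->
  0 < pos_inv (g lam) r /\ lam * f (pos_inv (g lam) r) = r.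
Proof.
  intros Hlam Hr; rewrite <- g_scaled; apply pos_inv_spec.
  destruct (f_onto (r / lam)) as [t [Ht Hft]]; [apply Rdiv_lt_0_compat; lra|].
  exists t; split; [exact Ht|]; rewrite g_scaled, Hft; field; lra.
Qed.

End Scaled.

Lemma glued_family_dilation e p chi (g : R -> R -> R) :
  e < 0 -> p * e = e - 1 -> 7/5 <= p ->
  convex_on_half_one chi -> decreasing_on_half_one chi ->
  (forall lam t, g lam t = lam * glue e chi t) -> C1_pos (g 1) ->
  forall k, 0 < k -> exists C, forall r lam, 0 < r -> 1 <= lam ->
    0 <= - Derive (g lam) (pos_inv (g lam) r) /\
    - Derive (g lam) (pos_inv (g lam) (k * r)) <= C * - Derive (g lam) (pos_inv (g lam) r).
Proof.
  intros He Hpe Hp Hcvx Hdecr Hg HC1 k Hk.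
  set (f := g 1).
  assert (f_glue : forall t, f t = glue e chi t) by (intros t; unfold f; rewrite Hg; ring).
  assert (g_f : forall lam t, g lam t = lam * f t) by (intros; rewrite Hg, f_glue; reflexivity).
  assert (f_onto := glue_onto e chi f He f_glue HC1).
  assert (Hcmp := Derive_glue_comparable e chi f He Hcvx Hdecr f_glue HC1 p Hpe Hp).
  assert (f_pos := glue_gt_0 e chi f He Hdecr f_glue HC1).
  destruct (comparable_phi_dilation _ _ p Hcmp f_pos k Hk) as [C HC].
  exists C; intros r lam Hr Hlam.
  destruct (pos_inv_scaled f g g_f f_onto lam r ltac:(lra) Hr) as [Ht Eft].
  destruct (pos_inv_scaled f g g_f f_onto lam (k * r) ltac:(lra) ltac:(nra)) as [Ht' Eft'].
  rewrite !(Derive_scaled f g g_f).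
  set (t := pos_inv (g lam) r) in *; set (t' := pos_inv (g lam) (k * r)) in *.
  assert (Hd := comparable_on_gt_0 _ _ _ Hcmp (fun t _ => phi_gt_0 p (f t)) t Ht).
  assert (Hft' : f t' = k * f t) by (apply Rmult_eq_reg_l with lam; nra).
  assert (Hb := HC t t' Ht Ht' Hft').
  simpl in Hd; split; nra.
Qed.

Theorem lemmaB1 (chi chit : R -> R)
  (Hchi : admissible_m chi) (Hchit : admissible_mu chit) :
  forall kappa : R, 0 < kappa ->
  exists C : R, forall r lam : R, 0 < r -> 1 <= lam ->
    xi chi lam (kappa * r) <= C * xi chi lam r /\
    vartheta chit lam (kappa * r) <= C * vartheta chit lam r.
Proof.
  intros kappa Hk.
  destruct Hchi as [Hcvx [Hdecr Hm]]; destruct Hchit as [Hcvx' [Hdecr' Hmu]].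
  destruct (glued_family_dilation (-3/2) (5/3) chi (m_fun chi)) with (k := kappa)
    as [Cm HCm]; try lra; auto using m_fun_glue; [apply Hm; lra|].
  destruct (glued_family_dilation (-1/2) 3 chit (mu_fun chit)) with (k := kappa)
    as [Cmu HCmu]; try lra; auto using mu_fun_glue; [apply Hmu; lra|].
  exists (Rmax Cm Cmu); intros r lam Hr Hlam; unfold xi, vartheta.
  destruct (HCm r lam Hr Hlam) as [Pm Bm]; destruct (HCmu r lam Hr Hlam) as [Pmu Bmu].
  split.
  - eapply Rle_trans; [exact Bm | apply Rmult_le_compat_r; [exact Pm | apply Rmax_l]].
  - eapply Rle_trans; [exact Bmu | apply Rmult_le_compat_r; [exact Pmu | apply Rmax_r]].
Qed.
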